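(* Consider the general LPP model described in the context, fix $\eta_0\in(0,\infty)$, $u\in\mathbb{R}$, set $\eta=\eta_0+ut^{-2/3}$, and suppose Assumptions A1, A2 and A3 hold. Let $D$ be a probability distribution. If, as $t\to\infty$, $$Y_{t,1}:=\frac{\tilde L_{\mathcal{L}^-\to(\eta t,t)}-\mu t}{t^{1/3}}-\frac{\tilde L_{\mathcal{L}^+\to E^+}+L_{E^+\to(\eta t,t)}-\mu t}{t^{1/3}}\Rightarrow D,$$ then $$Y_{t,2}:=\frac{L_{\mathcal{L}^-\to(\eta t,t)}-\mu t}{t^{1/3}}-\frac{L_{\mathcal{L}^+\to E^+}+L_{E^+\to(\eta t,t)}-\mu t}{t^{1/3}}\Rightarrow D.$$
   Context: LPP: for independent nonnegative $\{\omega_{i,j}\}$, an up-right path is a sequence of points of $\mathbb{Z}^2$ with increments in $\{(1,0),(0,1)\}$; $L_{S_A\to S_E}=\max_\pi\sum_{(i,j)\in\pi\setminus S_A}\omega_{i,j}$ over up-right paths from $S_A$ to $S_E$ ($-\infty$ if none); $\pi^{\max}_{L_{A\to B}}$ is the a.s. unique maximizing path; non-integer coordinates are understood as integer parts. General model: integers $x_k(0)$, $k\in\mathbb{Z}$, with $x_{k+1}(0)<x_k(0)$, $x_0(0)=1$, $x_1(0)<-1$; $\omega_{i,j}$ independent exponential with rate $v_j>0$; $\mathcal{L}^+=\{(k+x_k(0),k):k>0\}$, $\mathcal{L}^-=\{(k+x_k(0),k):k\le0\}$. Assumption A1: there exist $\mu\in\mathbb{R}$ and continuous distribution functions $G_1(\cdot;u),G_2(\cdot;u)$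 with $\lim_{t\to\infty}\mathbb{P}((L_{\mathcal{L}^+\to(\eta t,t)}-\mu t)/t^{1/3}\le s)=G_1(s;u)$ and $\lim_{t\to\infty}\mathbb{P}((L_{\mathcal{L}^-\to(\eta t,t)}-\mu t)/t^{1/3}\le s)=G_2(s;u)$ for all $s$. Assumption A2: there exist $\kappa,\mu_0\in\mathbb{R}$, $\nu\in(1/3,1)$ and a continuous distribution function $G_0(\cdot;u)$ such that, with $E^+=(\eta t-\kappa t^\nu,t-t^\nu)$, for all $s$: $\lim_{t\to\infty}\mathbb{P}((L_{E^+\to(\eta t,t)}-\mu_0t^\nu)/t^{\nu/3}\le s)=G_0(s;u)$ and $\lim_{t\to\infty}\mathbb{P}((L_{\mathcal{L}^+\to E^+}-\mu t+\mu_0t^\nu)/t^{1/3}\le s)=G_1(s;u)$. Assumption A3: for some $\beta\in(0,\nu)$, with $D_\gamma=(\lfloor\gamma\eta t\rfloor,\lfloor\gamma t\rfloor)$: $\lim_{t\to\infty}\mathbb{P}(\bigcup_{\gamma\in[0,1-t^{\beta-1}]}\{D_\gamma\in\pi^{\max}_{L_{\mathcal{L}^+\to E^+}}\})=0$ and $\lim_{t\to\infty}\mathbb{P}(\bigcup_{\gamma\in[0,1-t^{\beta-1}]}\{D_\gamma\in\pi^{\max}_{L_{\mathcal{L}^-\to(\eta t,t)}}\})=0$. For a set $B$ and point $C$, $\tilde L_{B\to C}$ is defined like $L_{B\to C}$ but with the maximum taken only over up-right paths containing none of the points $D_\gamma$, $\gamma\in[0,1-t^{\beta-1}]$. ''$\Rightarrow$''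 denotes convergence in distribution. *)

From HB Require Import structures.
From mathcomp Require Import all_boot all_order all_algebra.
From mathcomp Require Import all_classical all_reals all_analysis.
From mathcomp Require Import exponential_distribution.
Set Implicit Arguments. Unset Strict Implicit. Unset Printing Implicit Defensive.
Import Order.TTheory GRing.Theory Num.Theory.
Import numFieldNormedType.Exports.
Local Open Scope classical_set_scope.
Local Open Scope ring_scope.

Definition pt := (int * int)%type.

Definition step (p : pt) (b : bool) : pt :=
  if b then (p.1 + 1, p.2) else (p.1, p.2 + 1).

Fixpoint path_pts (p : pt) (s : seq bool) : seq pt :=
  p :: match s with [::] => [::] | b :: s' => path_pts (step p b) s' end.

Definition path_end (ps : pt * seq bool) : pt := last ps.1 (path_pts ps.1 ps.2).

Definition paths (A E F : set pt) : set (pt * seq bool) :=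
  [set ps | A ps.1 /\ E (path_end ps) /\
            (forall q, q \in path_pts ps.1 ps.2 -> ~ F q)].

Definition pathw {R : realType} (om : pt -> R) (A : set pt) (ps : pt * seq bool) : R :=
  \sum_(q <- path_pts ps.1 ps.2 | q \notin A) om q.

(** Last passage value over paths avoiding F (in \bar R; -oo if no path). *)
Definition LPPF {R : realType} (om : pt -> R) (A E F : set pt) : \bar R :=
  ereal_sup [set (pathw om A ps)%:E | ps in paths A E F].

Definition LPP {R : realType} (om : pt -> R) (A E : set pt) : \bar R :=
  LPPF om A E set0.

(** "the maximizing path pi^max of L_{A->E} contains a point of F", i.e. the
    maximum L_{A->E} is not attained by any path avoiding F. *)
Definition pimax_hits {R : realType} (om : pt -> R) (A E F : set pt) : Prop :=
  ~ exists ps, paths A E F ps /\ (pathw om A ps)%:E = LPP om A E.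

Definition mutually_independent {d} {T : measurableType d} {R : realType} {I : eqType}
  (P : probability T R) (X : I -> T -> R) : Prop :=
  forall (J : seq I) (B : I -> set R), uniq J -> (forall i, measurable (B i)) ->
    P (\bigcap_(i in [set` J]) (X i @^-1` B i)) = (\prod_(i <- J) P (X i @^-1` B i))%E.

Definition cont_cdf {R : realType} (G : R -> R) : Prop :=
  continuous G /\ {homo G : x y / x <= y} /\
  G x @[x --> -oo] --> (0:R) /\ G x @[x --> +oo] --> (1:R).

(** Convergence in distribution, as t -> +oo, of the (possibly extended-real
    valued) family Y t to the probability distribution D on R:
    P(Y t <= s) -> D(]-oo,s]) at every continuity point s of the cdf of D. *)
Definition cvg_in_dist {d} {T : measurableType d} {R : realType}
  (P : probability T R) (Y : R -> T -> \bar R) (D : probability R R) : Prop :=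
  forall s : R, D [set s] = 0%E ->
    P [set w | (Y t w <= s%:E)%E] @[t --> +oo] --> D [set x | x <= s].

Definition fpt {R : realType} (a b : R) : pt := (Num.floor a, Num.floor b).

Definition Lplus (x : int -> int) : set pt := [set p | exists k : int, 0 < k /\ p = (k + x k, k)].
Definition Lminus (x : int -> int) : set pt := [set p | exists k : int, k <= 0 /\ p = (k + x k, k)].

Definition eta_t {R : realType} (eta0 u t : R) : R := eta0 + u * t `^ (- (2 / 3)).

Definition endpt {R : realType} (eta0 u t : R) : set pt := [set fpt (eta_t eta0 u t * t) t].

Definition Eplus {R : realType} (eta0 u kappa nu t : R) : set pt :=
  [set fpt (eta_t eta0 u t * t - kappa * t `^ nu) (t - t `^ nu)].

Definition Dset {R : realType} (eta0 u beta t : R) : set pt :=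
  [set p | exists gamma : R, 0 <= gamma <= 1 - t `^ (beta - 1) /\
           p = fpt (gamma * eta_t eta0 u t * t) (gamma * t)].

Definition resc {R : realType} (Z : \bar R) (m t : R) : \bar R :=
  ((Z - m%:E) * (t `^ (1 / 3))^-1%:E)%E.

From HB Require Import structures.
From mathcomp Require Import all_boot all_order all_algebra.
From mathcomp Require Import all_classical all_reals all_analysis.
From mathcomp Require Import exponential_distribution.
Import Order.TTheory GRing.Theory Num.Theory.
Import numFieldNormedType.Exports.
From mathcomp Require Import measurable_realfun lra.
Local Open Scope classical_set_scope.
Local Open Scope ring_scope.

(** Outside the events "the maximizing path of L_{L^+ -> E^+} (resp. of
    L_{L^- -> (eta t, t)}) hits some D_gamma", each restricted passage time
    coincides with the unrestricted one, so Y_{t,1} = Y_{t,2} there.  By A3 the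
    probability of these events vanishes, hence P(Y_{t,1} <= s) and
    P(Y_{t,2} <= s) have the same limit. *)

Lemma LPPF_le_LPP (R : realType) (om : pt -> R) A E F :
  (LPPF om A E F <= LPP om A E)%E.
Proof.
rewrite /LPP /LPPF; apply: ereal_sup_le => _ [ps [Aps [Eps _]] <-].
by exists ps => //; split => //; split => // q _ [].
Qed.

Lemma LPPF_eq_LPP (R : realType) (om : pt -> R) A E F :
  ~ pimax_hits om A E F -> LPPF om A E F = LPP om A E.
Proof.
move=> /contrapT [ps [hps e]].
apply/eqP; rewrite eq_le LPPF_le_LPP /= -e.
by apply: ereal_sup_ubound; exists ps.
Qed.

(* Paths are enumerated through [unpickle], so the supremum becomes countable. *)
Definition LPPF_seq {R : realType} {T : Type} (om : pt -> T -> R)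
    (A E F : set pt) (n : nat) (w : T) : \bar R :=
  if @unpickle (pt * seq bool)%type n is Some ps then
    (if `[< paths A E F ps >] then (pathw (om^~ w) A ps)%:E else -oo)%E
  else -oo%E.

Section measurability.
Context {R : realType} {d : measure_display} {T : measurableType d}
  {om : pt -> T -> R} (hmeas : forall q, measurable_fun setT (om q)).

Lemma measurable_pathw A ps : measurable_fun setT (fun w => pathw (om^~ w) A ps).
Proof.
have -> : (fun w => pathw (om^~ w) A ps) =
    fun w => \sum_(q <- path_pts ps.1 ps.2) (if q \notin A then om q w else 0).
  by apply/funext => w; rewrite /pathw big_mkcond.
by apply: measurable_sum => q; case: (q \notin A).
Qed.

Lemma LPPF_esups A E F w : LPPF (om^~ w) A E F = esups (LPPF_seq om A E F ^~ w) 0.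
Proof.
apply/eqP; rewrite eq_le; apply/andP; split.
  apply: ge_ereal_sup => _ [ps hps <-]; apply: ereal_sup_ubound.
  by exists (pickle ps) => //; rewrite /LPPF_seq pickleK; case: asboolP.
apply: ge_ereal_sup => _ [n _ <-]; rewrite /LPPF_seq.
case: (unpickle n) => [ps|]; last exact: leNye.
case: asboolP => hps; last exact: leNye.
by apply: ereal_sup_ubound; exists ps.
Qed.

Lemma measurable_LPPF A E F : measurable_fun setT (fun w => LPPF (om^~ w) A E F).
Proof.
rewrite (funext (LPPF_esups A E F)).
apply: measurable_fun_esups => n; rewrite /LPPF_seq.
case: (unpickle n) => [ps|]; last exact: measurable_cst.
case: asboolP => _; last exact: measurable_cst.
exact/measurable_EFinP/measurable_pathw.
Qed.

Lemma measurable_pimax_hits A E F :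
  measurable [set w | pimax_hits (om^~ w) A E F].
Proof.
pose attains ps := [set w | paths A E F ps /\
                            (pathw (om^~ w) A ps)%:E = LPP (om^~ w) A E].
have -> : [set w | pimax_hits (om^~ w) A E F] = ~` \bigcup_ps attains ps.
  apply/seteqP; split => w.
    by move=> nh [ps _ hp]; apply: nh; exists ps.
  by move=> nb [ps hps]; apply: nb; exists ps.
apply/measurableC/countable_bigcupT_measurable; first exact: countableP.
move=> ps; have [hp|hp] := pselect (paths A E F ps); last first.
  by have -> : attains ps = set0 by apply/seteqP; split => w // [].
have -> : attains ps =
    setT `&` [set w | (pathw (om^~ w) A ps)%:E = LPP (om^~ w) A E].
  by apply/seteqP; split => w; [case | move=> [_ ?]].
apply: measurable_eqe => //; last exact: measurable_LPPF.
exact/measurable_EFinP/measurable_pathw.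
Qed.

Lemma measurable_resc (Z : T -> \bar R) m t : measurable_fun setT Z ->
  measurable_fun setT (fun w => resc (Z w) m t).
Proof.
move=> mZ; apply: emeasurable_funM; last exact: measurable_cst.
by apply: emeasurable_funB => //; exact: measurable_cst.
Qed.

Lemma measurable_resc_LPP_diff_le A1 E1 F1 A2 E2 F2 A3 E3 m t s :
  measurable [set w | (resc (LPPF (om^~ w) A1 E1 F1) m t
    - resc (LPPF (om^~ w) A2 E2 F2 + LPP (om^~ w) A3 E3) m t <= s)%E].
Proof.
rewrite -[X in measurable X]setTI; apply: measurable_lee => //.
apply: emeasurable_funB; apply: measurable_resc; first exact: measurable_LPPF.
by apply: emeasurable_funD; exact: measurable_LPPF.
Qed.

End measurability.

Section probability_limits.
Context {R : realType} {d : measure_display} {T : measurableType d}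
  (P : probability T R).

Lemma fine_probability_le_setU {A S B : set T} :
  measurable A -> measurable S -> measurable B ->
  A `<=` S `|` B -> fine (P A) <= fine (P S) + fine (P B).
Proof.
move=> mA mS mB AsSB.
have : (P A <= P S + P B)%E.
  apply: le_trans (measureU2 _ mS mB).
  by apply: le_measure => //; rewrite inE //; exact: measurableU.
rewrite -(fineK (fin_num_measure P A mA)) -(fineK (fin_num_measure P S mS)).
by rewrite -(fineK (fin_num_measure P B mB)) -EFinD lee_fin.
Qed.

Lemma fine_probability_cvg (S : R -> set T) (l : R) :
  (forall t, measurable (S t)) ->
  fine (P (S t)) @[t --> +oo] --> l -> P (S t) @[t --> +oo] --> l%:E.
Proof.
move=> mS; apply: cvg_EFin.
by apply: nearW => t; exact: fin_num_measure.
Qed.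

Lemma cvg_probability_setU0 (B1 B2 : R -> set T) :
  (forall t, measurable (B1 t)) -> (forall t, measurable (B2 t)) ->
  P (B1 t) @[t --> +oo] --> 0%E -> P (B2 t) @[t --> +oo] --> 0%E ->
  P (B1 t `|` B2 t) @[t --> +oo] --> 0%E.
Proof.
move=> m1 m2 /fine_cvg h1 /fine_cvg h2.
have m12 t : measurable (B1 t `|` B2 t) by exact: measurableU.
apply: fine_probability_cvg => //.
apply: (@squeeze_cvgr _ _ _ _ (cst 0)
  (fun t => fine (P (B1 t)) + fine (P (B2 t)))).
- apply: nearW => t /=; rewrite fine_ge0 ?measure_ge0 //=.
  exact: fine_probability_le_setU.
- exact: cvg_cst.
- by rewrite -[0]addr0; exact: cvgD.
Qed.

Lemma cvg_probability_eq_off (S1 S2 B : R -> set T) (l : \bar R) :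
  (forall t, measurable (S1 t)) -> (forall t, measurable (S2 t)) ->
  (forall t, measurable (B t)) ->
  (forall t, S1 t `<=` S2 t `|` B t) -> (forall t, S2 t `<=` S1 t `|` B t) ->
  l \is a fin_num -> P (B t) @[t --> +oo] --> 0%E ->
  P (S1 t) @[t --> +oo] --> l -> P (S2 t) @[t --> +oo] --> l.
Proof.
move=> m1 m2 mB s12 s21 fl /fine_cvg hB.
rewrite -(fineK fl) => /fine_cvg h1; apply: fine_probability_cvg => //.
apply: (@squeeze_cvgr _ _ _ _
  (fun t => fine (P (S1 t)) - fine (P (B t)))
  (fun t => fine (P (S1 t)) + fine (P (B t)))).
- apply: nearW => t /=; apply/andP; split; last exact: fine_probability_le_setU.
  by have := fine_probability_le_setU (m1 t) (m2 t) (mB t) (s12 t); lra.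
- by rewrite -[fine l]subr0; exact: cvgB.
- by rewrite -[fine l]addr0; exact: cvgD.
Qed.

End probability_limits.

Lemma sublevel_sub_setU {R : realType} {T : Type} (f g : T -> \bar R)
    (B : set T) (s : \bar R) :
  (forall w, ~ B w -> f w = g w) ->
  [set w | (f w <= s)%E] `<=` [set w | (g w <= s)%E] `|` B.
Proof.
move=> fg w /= fs; have [Bw|nBw] := pselect (B w); first by right.
by left; rewrite -fg.
Qed.

Theorem proposition2p7 (R : realType)
  (* general LPP model *)
  (x : int -> int) (v : int -> R)
  (hx_decr : forall k : int, x (k + 1) < x k) (hx0 : x 0 = 1) (hx1 : x 1 < - 1)
  (hv : forall j : int, 0 < v j)
  (d : measure_display) (T : measurableType d) (P : probability T R)
  (omega : pt -> T -> R)
  (hmeas : forall q : pt, measurable_fun setT (omega q))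
  (hindep : mutually_independent P omega)
  (hexp : forall (q : pt) (B : set R), measurable B ->
            P (omega q @^-1` B) = exponential_prob (v q.2) B)
  (* parameters *)
  (eta0 u : R) (heta0 : 0 < eta0)
  (* Assumption A1 *)
  (mu : R) (G1 G2 : R -> R) (hG1 : cont_cdf G1) (hG2 : cont_cdf G2)
  (A1p : forall s : R,
     P [set w | (resc (LPP (omega^~ w) (Lplus x) (endpt eta0 u t)) (mu * t) t
                 <= s%:E)%E] @[t --> +oo] --> (G1 s)%:E)
  (A1m : forall s : R,
     P [set w | (resc (LPP (omega^~ w) (Lminus x) (endpt eta0 u t)) (mu * t) t
                 <= s%:E)%E] @[t --> +oo] --> (G2 s)%:E)
  (* Assumption A2 *)
  (kappa mu0 nu : R) (G0 : R -> R) (hnu : 1 / 3 < nu < 1) (hG0 : cont_cdf G0)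
  (A2a : forall s : R,
     P [set w | (((LPP (omega^~ w) (Eplus eta0 u kappa nu t) (endpt eta0 u t)
                   - (mu0 * t `^ nu)%:E) * (t `^ (nu / 3))^-1%:E) <= s%:E)%E]
       @[t --> +oo] --> (G0 s)%:E)
  (A2b : forall s : R,
     P [set w | (resc (LPP (omega^~ w) (Lplus x) (Eplus eta0 u kappa nu t)
                       + (mu0 * t `^ nu)%:E) (mu * t) t <= s%:E)%E]
       @[t --> +oo] --> (G1 s)%:E)
  (* Assumption A3 *)
  (beta : R) (hbeta : 0 < beta < nu)
  (A3p : P [set w | pimax_hits (omega^~ w) (Lplus x) (Eplus eta0 u kappa nu t)
                      (Dset eta0 u beta t)] @[t --> +oo] --> 0%E)
  (A3m : P [set w | pimax_hits (omega^~ w) (Lminus x) (endpt eta0 u t)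
                      (Dset eta0 u beta t)] @[t --> +oo] --> 0%E)
  (* the limit distribution *)
  (D : probability R R)
  (hY1 : cvg_in_dist P (fun t w =>
      (resc (LPPF (omega^~ w) (Lminus x) (endpt eta0 u t) (Dset eta0 u beta t)) (mu * t) t
       - resc (LPPF (omega^~ w) (Lplus x) (Eplus eta0 u kappa nu t) (Dset eta0 u beta t)
               + LPP (omega^~ w) (Eplus eta0 u kappa nu t) (endpt eta0 u t)) (mu * t) t)%E) D) :
  cvg_in_dist P (fun t w =>
      (resc (LPP (omega^~ w) (Lminus x) (endpt eta0 u t)) (mu * t) t
       - resc (LPP (omega^~ w) (Lplus x) (Eplus eta0 u kappa nu t)
               + LPP (omega^~ w) (Eplus eta0 u kappa nu t) (endpt eta0 u t)) (mu * t) t)%E) D.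
Proof.
move=> s hs.
pose hits_plus t := [set w | pimax_hits (omega^~ w) (Lplus x)
  (Eplus eta0 u kappa nu t) (Dset eta0 u beta t)].
pose hits_minus t := [set w | pimax_hits (omega^~ w) (Lminus x)
  (endpt eta0 u t) (Dset eta0 u beta t)].
have m_hits t : measurable (hits_plus t `|` hits_minus t).
  by apply: measurableU; exact: measurable_pimax_hits.
apply: (cvg_probability_eq_off P _ _ _ _ _ _ m_hits _ _ _ _ (hY1 s hs)).
- by move=> t; exact: measurable_resc_LPP_diff_le.
- by move=> t; exact: measurable_resc_LPP_diff_le.
- move=> t; apply: sublevel_sub_setU => w.
  by move=> /not_orP[/LPPF_eq_LPP -> /LPPF_eq_LPP ->].
- move=> t; apply: sublevel_sub_setU => w.
  by move=> /not_orP[/LPPF_eq_LPP -> /LPPF_eq_LPP ->].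
- by apply: fin_num_measure; rewrite -set_itvNyc; exact: measurable_itv.
- by apply: (cvg_probability_setU0 P _ _ _ _ A3p A3m) => t;
    exact: measurable_pimax_hits.
Qed.
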